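(* Let $P$ be a linear process, $a$ a name, and suppose $\mathrm{cin}(a,P)$ (respectively $\mathrm{cout}(a,P)$) and $P\to^* Q$. Then exactly one of the following holds: (1) $\mathrm{cin}(a,Q)$ (respectively $\mathrm{cout}(a,Q)$); (2) $a\notin\mathcal{N}(Q)$ and there exist processes $R_a, R'_a$ with $P\to^* R_a\to R'_a\to^* Q$, $a\notin\mathcal{N}(R'_a)$, $\mathcal{N}(R'_a)\cup\{a\}=\mathcal{N}(R_a)$, and $\mathrm{sync}(a,R_a)$.
   Context: Processes: $P ::= \mathbf{0} \mid \alpha.P \mid P\,|\,Q$ where $\alpha$ is a name $a$ or a co-name $\bar a$ (with $\bar{\bar a}=a$). Structural congruence $\equiv$ is the smallest congruence with $P|\mathbf{0}\equiv P$, $P|Q\equiv Q|P$, $P|(Q|R)\equiv(P|Q)|R$. Reduction $\to$ is the smallest relation with $a.P\,|\,\bar a.Q\to P\,|\,Q$, closed under parallel contexts and under $\equiv$; $\to^*$ is its reflexive–transitive closure. A process is linear if each name occurs at most once as an input $a$ and at most once as an output $\bar a$. $\mathcal{N}(P)$ is the set of names occurring in $P$ (as $a$ or $\bar a$). Process contexts: $C ::= [-] \mid P\,|\,C \mid C\,|\,P \mid \alpha.C$, with $C[Q]$ the result of filling the hole with $Q$. $\mathrm{in}(a,Q)$ iff $\exists Q',Q''.\ Q\equiv Q'\,|\,a.Q''$; $\mathrm{out}(a,Q)$ iff $\exists Q',Q''.\ Q\equiv Q'\,|\,\bar a.Q''$; $\mathrm{sync}(a,Q)$ iff both hold. $\mathrm{cin}(a,P)$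 iff there exist a process context $C$ and $Q$ with $P\equiv C[Q]$ and $\mathrm{in}(a,Q)$; $\mathrm{cout}(a,P)$ likewise with $\mathrm{out}(a,Q)$. *)

(* a finite CCS-like process calculus (no restriction). *)
From Stdlib Require Import Arith Relations.

(* Names are natural numbers. A prefix is a name a (input) or a co-name
   \bar a (output); the involution \bar{\bar a} = a is implicit in this
   representation. *)
Definition name := nat.

Inductive act : Type :=
| In : name -> act
| Out : name -> act.

Inductive proc : Type :=
| Nil : proc
| Pre : act -> proc -> proc
| Par : proc -> proc -> proc.

Inductive scong : proc -> proc -> Prop :=
| sc_refl : forall P, scong P P
| sc_sym : forall P Q, scong P Q -> scong Q P
| sc_trans : forall P Q R, scong P Q -> scong Q R -> scong P R
| sc_par_nil : forall P, scong (Par P Nil) P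
| sc_par_comm : forall P Q, scong (Par P Q) (Par Q P)
| sc_par_assoc : forall P Q R, scong (Par P (Par Q R)) (Par (Par P Q) R)
| sc_cong_pre : forall α P Q, scong P Q -> scong (Pre α P) (Pre α Q)
| sc_cong_par : forall P P' Q Q', scong P P' -> scong Q Q' ->
    scong (Par P Q) (Par P' Q').

Inductive red : proc -> proc -> Prop :=
| red_comm : forall a P Q, red (Par (Pre (In a) P) (Pre (Out a) Q)) (Par P Q)
| red_par_l : forall P P' Q, red P P' -> red (Par P Q) (Par P' Q)
| red_par_r : forall P Q Q', red Q Q' -> red (Par P Q) (Par P Q')
| red_struct : forall P P1 Q1 Q, scong P P1 -> red P1 Q1 -> scong Q1 Q -> red P Q.

Definition reds : proc -> proc -> Prop := clos_refl_trans proc red.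

Fixpoint count_in (a : name) (P : proc) : nat :=
  match P with
  | Nil => 0
  | Pre (In b) P' => (if Nat.eqb a b then 1 else 0) + count_in a P'
  | Pre (Out _) P' => count_in a P'
  | Par P1 P2 => count_in a P1 + count_in a P2
  end.

Fixpoint count_out (a : name) (P : proc) : nat :=
  match P with
  | Nil => 0
  | Pre (Out b) P' => (if Nat.eqb a b then 1 else 0) + count_out a P'
  | Pre (In _) P' => count_out a P'
  | Par P1 P2 => count_out a P1 + count_out a P2
  end.

Definition linear (P : proc) : Prop :=
  forall a, count_in a P <= 1 /\ count_out a P <= 1.

Definition act_name (α : act) : name :=
  match α with In a => a | Out a => a end.

Fixpoint occurs (a : name) (P : proc) : Prop :=
  match P with
  | Nil => False
  | Pre α P' => a = act_name α \/ occurs a P'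
  | Par P1 P2 => occurs a P1 \/ occurs a P2
  end.

Inductive ctx : Type :=
| Hole : ctx
| CParL : proc -> ctx -> ctx
| CParR : ctx -> proc -> ctx
| CPre : act -> ctx -> ctx.

Fixpoint fill (C : ctx) (Q : proc) : proc :=
  match C with
  | Hole => Q
  | CParL P C' => Par P (fill C' Q)
  | CParR C' P => Par (fill C' Q) P
  | CPre α C' => Pre α (fill C' Q)
  end.

Definition in_ (a : name) (Q : proc) : Prop :=
  exists Q' Q'', scong Q (Par Q' (Pre (In a) Q'')).
Definition out_ (a : name) (Q : proc) : Prop :=
  exists Q' Q'', scong Q (Par Q' (Pre (Out a) Q'')).
Definition sync (a : name) (Q : proc) : Prop := in_ a Q /\ out_ a Q.

Definition cin (a : name) (P : proc) : Prop :=
  exists C Q, scong P (fill C Q) /\ in_ a Q.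
Definition cout (a : name) (P : proc) : Prop :=
  exists C Q, scong P (fill C Q) /\ out_ a Q.

Definition consumed (a : name) (P Q : proc) : Prop :=
  ~ occurs a Q /\
  exists Ra Ra', reds P Ra /\ red Ra Ra' /\ reds Ra' Q /\
    ~ occurs a Ra' /\
    (forall b, occurs b Ra <-> (occurs b Ra' \/ b = a)) /\
    sync a Ra.

Definition xor (X Y : Prop) : Prop := (X \/ Y) /\ ~ (X /\ Y).

(* Counting occurrences turns the statement into arithmetic. Every reduction
   step synchronises some name b, removing one input and one output of b and
   leaving all other counts unchanged. Along P ->* Q the counts of a are
   therefore constant until the first step that synchronises a; by linearity
   that step removes the only input and the only output of a, after which a
   never occurs again. Since cin a Q (resp. cout a Q) just says that a occurs
   in Q as an input (resp. output), exactly one alternative holds. *)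

From Stdlib Require Import Arith Lia Relations Setoid Morphisms.

#[local] Instance scong_equivalence : Equivalence scong.
Proof. split; [exact sc_refl | exact sc_sym | exact sc_trans]. Qed.

#[local] Instance Par_scong : Proper (scong ==> scong ==> scong) Par.
Proof. intros P P' HP Q Q' HQ; exact (sc_cong_par _ _ _ _ HP HQ). Qed.

Lemma sc_nil_par (P : proc) : scong (Par Nil P) P.
Proof. rewrite sc_par_comm; apply sc_par_nil. Qed.

Lemma sc_par_swap_r (P Q R : proc) : scong (Par (Par P Q) R) (Par (Par P R) Q).
Proof. rewrite <- !sc_par_assoc, (sc_par_comm Q R); reflexivity. Qed.

Lemma scong_count_in (P Q : proc) (a : name) :
  scong P Q -> count_in a P = count_in a Q.
Proof.
  induction 1; simpl; try destruct α; simpl; lia.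
Qed.

Lemma scong_count_out (P Q : proc) (a : name) :
  scong P Q -> count_out a P = count_out a Q.
Proof.
  induction 1; simpl; try destruct α; simpl; lia.
Qed.

Lemma scong_occurs (P Q : proc) (a : name) :
  scong P Q -> occurs a P <-> occurs a Q.
Proof. induction 1; simpl; tauto. Qed.

Lemma occurs_iff_count (a : name) (P : proc) :
  occurs a P <-> 0 < count_in a P + count_out a P.
Proof.
  induction P as [| [b | b] P IH | P1 IH1 P2 IH2]; simpl.
  - lia.
  - destruct (Nat.eqb_spec a b); rewrite IH; lia.
  - destruct (Nat.eqb_spec a b); rewrite IH; lia.
  - rewrite IH1, IH2; lia.
Qed.

Definition count (α : act) (P : proc) : nat :=
  match α with In a => count_in a P | Out a => count_out a P end.

Definition has_prefix (α : act) (Q : proc) : Prop :=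
  exists Q' Q'', scong Q (Par Q' (Pre α Q'')).

Lemma act_eq_dec (α β : act) : {α = β} + {α <> β}.
Proof. decide equality; apply Nat.eq_dec. Qed.

Lemma scong_count (α : act) (P Q : proc) : scong P Q -> count α P = count α Q.
Proof. destruct α; [apply scong_count_in | apply scong_count_out]. Qed.



Lemma count_fill (α : act) (C : ctx) (Q : proc) : count α Q <= count α (fill C Q).
Proof.
  induction C as [| P C IH | C IH P | [b | b] C IH];
    destruct α; simpl in *; lia.
Qed.

Lemma count_pos_fill (α : act) (P : proc) :
  0 < count α P -> exists C R, P = fill C (Pre α R).
Proof.
  induction P as [| β P IH | P1 IH1 P2 IH2]; intros Hpos.
  - destruct α; simpl in Hpos; lia.
  - destruct (act_eq_dec α β) as [<- | Hne].
    + exists Hole, P; reflexivity.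
    + destruct IH as (C & R & ->).
      { destruct α as [a | a], β as [b | b]; simpl in *;
          try destruct (Nat.eqb_spec a b); subst; try congruence; lia. }
      exists (CPre β C), R; reflexivity.
  - destruct (Nat.lt_ge_cases 0 (count α P1)) as [H1 | H1].
    + destruct (IH1 H1) as (C & R & ->); exists (CParR C P2), R; reflexivity.
    + destruct IH2 as (C & R & ->); [destruct α; simpl in *; lia |].
      exists (CParL P1 C), R; reflexivity.
Qed.

Lemma has_prefix_under_ctx_iff (α : act) (P : proc) :
  (exists C Q, scong P (fill C Q) /\ has_prefix α Q) <-> 0 < count α P.
Proof.
  split.
  - intros (C & Q & HPC & Q' & Q'' & HQ).
    rewrite (scong_count _ _ _ HPC).
    eapply Nat.lt_le_trans; [| apply count_fill].
    rewrite (scong_count _ _ _ HQ); destruct α; simpl; rewrite Nat.eqb_refl; lia.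
  - intros Hpos; destruct (count_pos_fill α P Hpos) as (C & R & ->).
    exists C, (Pre α R); split; [reflexivity |].
    exists Nil, R; symmetry; apply sc_nil_par.
Qed.

Lemma cin_iff_count (a : name) (P : proc) : cin a P <-> 0 < count_in a P.
Proof. exact (has_prefix_under_ctx_iff (In a) P). Qed.

Lemma cout_iff_count (a : name) (P : proc) : cout a P <-> 0 < count_out a P.
Proof. exact (has_prefix_under_ctx_iff (Out a) P). Qed.

Lemma red_redex (P Q : proc) : red P Q ->
  exists E b P1 Q1,
    scong P (Par E (Par (Pre (In b) P1) (Pre (Out b) Q1))) /\
    scong Q (Par E (Par P1 Q1)).
Proof.
  induction 1 as [a P Q | P P' Q _ IH | P Q Q' _ IH | P P1 Q1 Q HP _ IH HQ].
  - exists Nil, a, P, Q; split; symmetry; apply sc_nil_par.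
  - destruct IH as (E & b & P1 & Q1 & HP & HP').
    exists (Par E Q), b, P1, Q1; rewrite HP, HP'; split; apply sc_par_swap_r.
  - destruct IH as (E & b & P1 & Q1 & HQ & HQ').
    exists (Par P E), b, P1, Q1; rewrite HQ, HQ'; split; apply sc_par_assoc.
  - destruct IH as (E & b & P2 & Q2 & HP1 & HQ1).
    exists E, b, P2, Q2; rewrite HP, <- HQ; split; assumption.
Qed.

Lemma red_counts (R R' : proc) (a : name) : red R R' ->
  (count_in a R' = count_in a R /\ count_out a R' = count_out a R) \/
  (count_in a R = S (count_in a R') /\ count_out a R = S (count_out a R') /\
   sync a R /\ (forall b, occurs b R <-> occurs b R' \/ b = a)).
Proof.
  intros Hred; destruct (red_redex R R' Hred) as (E & b & P1 & Q1 & HR & HR').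
  rewrite (scong_count_in _ _ a HR), (scong_count_in _ _ a HR'),
    (scong_count_out _ _ a HR), (scong_count_out _ _ a HR'); simpl.
  destruct (Nat.eqb_spec a b) as [<- | Hne]; [right | left; lia].
  split; [lia |]; split; [lia |]; split.
  - split.
    + exists (Par E (Pre (Out a) Q1)), P1.
      rewrite HR, (sc_par_comm (Pre (In a) P1)); apply sc_par_assoc.
    + exists (Par E (Pre (In a) P1)), Q1; rewrite HR; apply sc_par_assoc.
  - intros c; rewrite (scong_occurs _ _ c HR), (scong_occurs _ _ c HR'); simpl.
    tauto.
Qed.

Lemma consumed_red (a : name) (P Q Q' : proc) :
  consumed a P Q -> red Q Q' -> consumed a P Q'.
Proof.
  intros (Hocc & Ra & Ra' & HPRa & HRa & HRaQ & Hocc' & Hnames & Hsync) Hred.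
  split.
  - rewrite occurs_iff_count in *.
    destruct (red_counts Q Q' a Hred) as [Hc | Hc]; lia.
  - exists Ra, Ra'; split; [assumption |]; split; [assumption |]; split.
    + apply rt_trans with Q; [assumption | apply rt_step; assumption].
    + exact (conj Hocc' (conj Hnames Hsync)).
Qed.

Lemma reds_counts_or_consumed (a : name) (P Q : proc) :
  linear P -> reds P Q ->
  (count_in a Q = count_in a P /\ count_out a Q = count_out a P) \/
  consumed a P Q.
Proof.
  intros Hlin HPQ; apply clos_rt_rtn1 in HPQ.
  induction HPQ as [| Q0 Q Hred HPQ0 IH]; [left; split; reflexivity |].
  destruct IH as [[Hin Hout] | Hcons]; [| right; eapply consumed_red; eassumption].
  destruct (red_counts Q0 Q a Hred) as [[Hin' Hout'] | (Hin' & Hout' & Hsync & Hnames)].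
  - left; lia.
  - right; destruct (Hlin a) as [Hlin_in Hlin_out].
    assert (Hgone : ~ occurs a Q) by (rewrite occurs_iff_count; lia).
    split; [exact Hgone |].
    exists Q0, Q; split; [apply clos_rtn1_rt; assumption |].
    split; [assumption |]; split; [apply rt_refl |].
    exact (conj Hgone (conj Hnames Hsync)).
Qed.

Theorem lemma2 :
  forall (P Q : proc) (a : name),
    linear P -> reds P Q ->
    (cin a P -> xor (cin a Q) (consumed a P Q)) /\
    (cout a P -> xor (cout a Q) (consumed a P Q)).
Proof.
  intros P Q a Hlin HPQ.
  assert (Hexcl : consumed a P Q -> ~ cin a Q /\ ~ cout a Q).
  { intros [Hgone _]; rewrite occurs_iff_count in Hgone.
    rewrite cin_iff_count, cout_iff_count; lia. }
  destruct (reds_counts_or_consumed a P Q Hlin HPQ) as [[Hin Hout] | Hcons];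
    split; intros Hpos; (split; [| intros [? ?]; tauto]).
  - left; rewrite cin_iff_count in *; lia.
  - left; rewrite cout_iff_count in *; lia.
  - right; exact Hcons.
  - right; exact Hcons.
Qed.
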